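(* Let $T$ be a compactum, $k\in\mathbb N$, $\mathbf a\in T\sqcup\mathrm{Ent}\,T$, $\mathbf c\in\mathrm{Ent}\,T$ and $p\in T$, and suppose $\mathbf a-\mathbf c-p\ (k)$. Suppose $p$ is an accumulation point of an infinite set $B\subset\mathrm{Ent}\,T$. Then there exists $\mathbf b\in B$ such that $\mathbf a-\mathbf c-\mathbf b\ (k)$.
   Context: Let $T$ be a compact Hausdorff space, $S^2T$ the space of unordered pairs of points of $T$ (diagonal allowed), $\Delta^2T$ the diagonal. An entourage is a neighborhood of $\Delta^2T$ in $S^2T$; $\mathrm{Ent}\,T$ is the set of entourages. For an entourage $\mathbf e$, $\Delta_{\mathbf e}$ is the graph distance on $T$ for the graph with vertex set $T$ and edges the pairs $\{x,y\}\in\mathbf e$ ($\infty$ between components); for $a,b\subset T$, $\Delta_{\mathbf e}(a,b)=\inf\{\Delta_{\mathbf e}(x,y):x\in a,y\in b\}$. A set is $\mathbf e$-small if its $\Delta_{\mathbf e}$-diameter is $\le1$. Entourages $\mathbf a,\mathbf b$ are unlinked ($\mathbf a\bowtie\mathbf b$) if $T=a\cup b$ with $a$ $\mathbf a$-small, $b$ $\mathbf b$-small; linked otherwise. Standing conventions: all entourages considered are linked with themselves and have $\Delta_{\mathbf a}$-diameter of $T$ greater than $4$. For $\mathbf a\bowtie\mathbf b$ the shadow is $\mathrm{sh}_{\mathbf a}\mathbf b=\bigcap\{a: a\text{ is }\mathbf a\text{-small and }T\setminus a\text{ is }\mathbf b\text{-small}\}$. Betweenness for $k\in\mathbb N$: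 for entourages, $\mathbf a-\mathbf b-\mathbf c\ (k)$ means $\mathbf a\bowtie\mathbf b\bowtie\mathbf c$ and $\Delta_{\mathbf b}(\mathrm{sh}_{\mathbf b}\mathbf a,\mathrm{sh}_{\mathbf b}\mathbf c)>k$; for $p\in T$, $\mathbf a-\mathbf b-p\ (k)$ (equivalently $p-\mathbf b-\mathbf a\ (k)$) means $\mathbf a\bowtie\mathbf b$ and $\Delta_{\mathbf b}(\mathrm{sh}_{\mathbf b}\mathbf a,b)>k$ for every $\mathbf b$-small neighborhood $b$ of $p$; for distinct $p,q\in T$, $q-\mathbf b-p\ (k)$ means $\Delta_{\mathbf b}(b_1,b_2)>k$ for all $\mathbf b$-small neighborhoods $b_1$ of $p$ and $b_2$ of $q$. A point $p\in T$ is an accumulation point of $B\subset\mathrm{Ent}\,T$ if for every open $o\ni p$ in $T$ there are infinitely many $\mathbf b\in B$ for which $T\setminus o$ is $\mathbf b$-small (this is accumulation in the topology on $T\sqcup\mathrm{Ent}\,T$ whose neighborhoods of $t\in T$ contain sets $o\cup\{\mathbf e: T\setminus o\ \mathbf e\text{-small}\}$). *)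

From Stdlib Require Import List.
Import ListNotations.
Set Implicit Arguments.

Record compactum := Compactum {
  pt :> Type;
  op : (pt -> Prop) -> Prop;
  op_full : op (fun _ => True);
  op_inter : forall U V, op U -> op V -> op (fun x => U x /\ V x);
  op_union : forall F : (pt -> Prop) -> Prop,
      (forall U, F U -> op U) -> op (fun x => exists U, F U /\ U x);
  op_compact : forall F : (pt -> Prop) -> Prop,
      (forall U, F U -> op U) -> (forall x, exists U, F U /\ U x) ->
      exists l : list (pt -> Prop),
        (forall U, In U l -> F U) /\ (forall x, exists U, In U l /\ U x);
  op_hausdorff : forall x y, x <> y ->
      exists U V, op U /\ op V /\ U x /\ V y /\ (forall z, U z -> V z -> False)
}.

(** Subsets of S^2 T are represented by symmetric relations on T. *)
Definition rel (X : compactum) := X -> X -> Prop.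

Definition nbhd {X : compactum} (A : X -> Prop) (x : X) :=
  exists U, op X U /\ U x /\ (forall y, U y -> A y).

Definition open2 {X : compactum} (W : rel X) :=
  forall x y, W x y -> exists U V, op X U /\ op X V /\ U x /\ V y /\
     (forall u v, U u -> V v -> W u v).

(** Entourage: a neighbourhood of the diagonal in S^2 T (quotient topology of
    T x T: open sets of S^2 T = symmetric open subsets of T x T). *)
Definition entourage {X : compactum} (e : rel X) :=
  (forall x y, e x y -> e y x) /\
  exists W : rel X, open2 W /\ (forall x y, W x y -> W y x) /\
     (forall x, W x x) /\ (forall x y, W x y -> e x y).

(** [path_le e n x y] : Delta_e(x,y) <= n. *)
Fixpoint path_le {X : compactum} (e : rel X) (n : nat) (x y : X) : Prop :=
  match n with
  | 0 => x = y
  | S m => path_le e m x y \/ exists z, e x z /\ path_le e m z y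
  end.

(** Delta_e(A,B) > k (the infimum of a nat-valued set is attained, infinity if empty). *)
Definition dist_gt {X : compactum} (e : rel X) (k : nat) (A B : X -> Prop) :=
  forall x y, A x -> B y -> ~ path_le e k x y.

Definition small {X : compactum} (e : rel X) (A : X -> Prop) :=
  forall x y, A x -> A y -> path_le e 1 x y.

Definition unlinked {X : compactum} (a b : rel X) :=
  exists A B : X -> Prop, (forall x, A x \/ B x) /\ small a A /\ small b B.

(** Standing conventions: an entourage, linked with itself, Delta-diameter of T > 4. *)
Definition std_ent {X : compactum} (e : rel X) :=
  entourage e /\ ~ unlinked e e /\ (exists x y : X, ~ path_le e 4 x y).

Definition shadow {X : compactum} (a b : rel X) (x : X) :=
  forall A : X -> Prop, small a A -> small b (fun y => ~ A y) -> A x.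

Definition betw_ent {X : compactum} (a b c : rel X) (k : nat) :=
  unlinked a b /\ unlinked b c /\ dist_gt b k (shadow b a) (shadow b c).

Definition betw_ent_pt {X : compactum} (a b : rel X) (p : X) (k : nat) :=
  unlinked a b /\
  forall N : X -> Prop, nbhd N p -> small b N -> dist_gt b k (shadow b a) N.

Definition betw_pt_pt {X : compactum} (q : X) (b : rel X) (p : X) (k : nat) :=
  q <> p /\
  forall N1 N2 : X -> Prop, nbhd N1 p -> small b N1 -> nbhd N2 q -> small b N2 ->
    dist_gt b k N1 N2.

Definition pt_or_ent (X : compactum) := (X + rel X)%type.

Definition is_std {X : compactum} (a : pt_or_ent X) :=
  match a with inl _ => True | inr e => std_ent e end.

Definition betw_x_pt {X : compactum} (a : pt_or_ent X) (c : rel X) (p : X) (k : nat) :=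
  match a with
  | inl q => betw_pt_pt q c p k
  | inr e => betw_ent_pt e c p k
  end.

(** a - c - b (k) with a in T ⊔ Ent T, b an entourage
    (for a = q a point, this is b - c - q (k)). *)
Definition betw_x_ent {X : compactum} (a : pt_or_ent X) (c b : rel X) (k : nat) :=
  match a with
  | inl q => betw_ent_pt b c q k
  | inr e => betw_ent e c b k
  end.

Definition rel_eq {X : compactum} (e f : rel X) := forall x y, e x y <-> f x y.

(** Infinitely many (pairwise extensionally distinct) entourages satisfy P. *)
Definition infinitely_many {X : compactum} (P : rel X -> Prop) :=
  forall l : list (rel X), exists b, P b /\ forall b', In b' l -> ~ rel_eq b b'.

Definition acc_point {X : compactum} (B : rel X -> Prop) (p : X) :=
  forall o : X -> Prop, op X o -> o p ->
    infinitely_many (fun b => B b /\ small b (fun x => ~ o x)).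

(* Choose an open c-small neighbourhood o of p. Since p accumulates B, some b in B
   has T \ o b-small; then o and its complement witness c ⋈ b, and the shadow of b
   with respect to c lies in o. The hypothesis a - c - p (k) says that o is at
   Delta_c-distance > k from the relevant set on the a-side, so shrinking o to
   the shadow gives a - c - b (k). *)
From Stdlib Require Import List Classical.

Lemma entourage_small_open_nbhd {X : compactum} (c : rel X) (p : X) :
  entourage c -> exists o, op X o /\ o p /\ small c o.
Proof.
  intros [_ [W [HW [_ [Hrefl HWc]]]]].
  destruct (HW p p (Hrefl p)) as [U [V [HU [HV [Up [Vp HUV]]]]]].
  exists (fun x => U x /\ V x); split; [now apply op_inter | split; [now split |]].
  intros x y [Ux _] [_ Vy]; right; exists y; split; [apply HWc, HUV; auto | reflexivity].
Qed.

Lemma unlinked_complement {X : compactum} (a b : rel X) (A : X -> Prop) :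
  small a A -> small b (fun x => ~ A x) -> unlinked a b.
Proof.
  intros HA HB; exists A, (fun x => ~ A x); split; auto.
  intro x; apply classic.
Qed.

Lemma unlinked_sym {X : compactum} {a b : rel X} : unlinked a b -> unlinked b a.
Proof.
  intros [A [B [Hcov [HA HB]]]]; exists B, A; split; auto.
  intro x; destruct (Hcov x); auto.
Qed.

Lemma shadow_sub_small {X : compactum} (c b : rel X) (A : X -> Prop) :
  small c A -> small b (fun x => ~ A x) -> forall x, shadow c b x -> A x.
Proof. intros HA HB x Hx; exact (Hx A HA HB). Qed.

Lemma dist_gt_subl {X : compactum} {e : rel X} {k : nat} {A A' B : X -> Prop} :
  (forall x, A' x -> A x) -> dist_gt e k A B -> dist_gt e k A' B.
Proof. intros HA H x y Hx Hy; apply H; auto. Qed.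

Lemma dist_gt_subr {X : compactum} {e : rel X} {k : nat} {A B B' : X -> Prop} :
  (forall y, B' y -> B y) -> dist_gt e k A B -> dist_gt e k A B'.
Proof. intros HB H x y Hx Hy; apply H; auto. Qed.

Lemma acc_point_shadow_in_small_nbhd {X : compactum} {B : rel X -> Prop}
  {c : rel X} {p : X} :
  entourage c -> acc_point B p ->
  exists o b, nbhd o p /\ small c o /\ B b /\ unlinked c b /\
    (forall x, shadow c b x -> o x).
Proof.
  intros Hc Hacc.
  destruct (entourage_small_open_nbhd c p Hc) as [o [Ho [Hop Hsmall]]].
  destruct (Hacc o Ho Hop nil) as [b [[HB Hcompl] _]].
  exists o, b; split; [now exists o |].
  repeat split; auto.
  - exact (unlinked_complement c b o Hsmall Hcompl).
  - exact (shadow_sub_small c b o Hsmall Hcompl).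
Qed.

Theorem lemma3p1 (X : compactum) (k : nat) (a : pt_or_ent X) (c : rel X) (p : X)
  (B : rel X -> Prop) :
  is_std a -> std_ent c -> (forall b, B b -> std_ent b) ->
  betw_x_pt a c p k ->
  infinitely_many B -> acc_point B p ->
  exists b, B b /\ betw_x_ent a c b k.
Proof.
  intros _ [Hc _] _ Hbetw _ Hacc.
  destruct (acc_point_shadow_in_small_nbhd Hc Hacc)
    as [o [b [Hnbhd [Hsmall [HB [Hunl Hsh]]]]]].
  exists b; split; [exact HB |].
  destruct a as [q | e]; simpl in *.
  - destruct Hbetw as [_ Hfar]; split; [now apply unlinked_sym |].
    intros N HN HsN.
    exact (dist_gt_subl Hsh (Hfar o N Hnbhd Hsmall HN HsN)).
  - destruct Hbetw as [Hec Hfar]; repeat split; auto.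
    exact (dist_gt_subr Hsh (Hfar o Hnbhd Hsmall)).
Qed.
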